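(* Let $G$ be a graph, $k \ge \gamma(G)$ an integer, and let $A$ and $B$ be dominating sets of $G$ with $|A| = |B| = k$. Then $A$ and $B$ are joined by a path in $D_{k+1}(G)$ if and only if $A$ and $B$ are joined by a path in $X_k(G)$.
   Context: All graphs are finite and simple. A set $S \subseteq V(G)$ is a dominating set of $G$ if every vertex of $V(G)\setminus S$ is adjacent to a vertex of $S$. $\gamma(G)$ is the minimum cardinality of a dominating set of $G$. For an integer $k \ge \gamma(G)$, the $k$-dominating graph $D_k(G)$ is the graph whose vertices are the dominating sets of $G$ of cardinality at most $k$, with two such sets $A,B$ adjacent if and only if their symmetric difference $(A\setminus B)\cup(B\setminus A)$ consists of exactly one vertex of $G$. $X_k(G)$ is the graph whose vertices are the dominating sets of $G$ of cardinality exactly $k$, with two such sets $S,T$ adjacent if and only if there exist $s \in S$ and $t \in T$ with $T = (S\setminus\{s\})\cup\{t\}$ (and $S \neq T$). *)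

From mathcomp Require Import all_boot.
Set Implicit Arguments. Unset Strict Implicit. Unset Printing Implicit Defensive.

Definition simple_graph (T : finType) (e : rel T) : Prop :=
  symmetric e /\ irreflexive e.

Definition dominating (T : finType) (e : rel T) (S : {set T}) : bool :=
  [forall v, (v \notin S) ==> [exists u in S, e v u]].

Lemma dominating_setT (T : finType) (e : rel T) : dominating e [set: T].
Proof. by apply/forallP => v; rewrite in_setT. Qed.

Definition gamma (T : finType) (e : rel T) : nat :=
  #|[arg min_(S < [set: T] | dominating e S) #|S|]|.

Definition Dk_adj (T : finType) (e : rel T) (k : nat) : rel {set T} :=
  fun A B => [&& dominating e A, #|A| <= k, dominating e B, #|B| <= k &
     [exists x, (A :\: B) :|: (B :\: A) == [set x]]].

Definition Xk_adj (T : finType) (e : rel T) (k : nat) : rel {set T} :=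
  fun A B => [&& dominating e A, #|A| == k, dominating e B, #|B| == k,
     A != B & [exists s in A, exists t, B == (A :\ s) :|: [set t]]].

From mathcomp Require Import all_boot.
Set Implicit Arguments. Unset Strict Implicit. Unset Printing Implicit Defensive.

(* X_k-connectivity implies D_{k+1}-connectivity edge by edge: an X_k move
   S -> (S \ s) u {t} factors through the (k+1)-set S u {t}.
   For the converse we follow a D_{k+1}-path from A and maintain the
   invariant that the current set S is "tracked": some dominating k-set K
   reachable from A in X_k satisfies S ⊆ K when |S| <= k, and K ⊆ S when
   |S| = k+1.  The invariant is kept across an addition by enlarging the new
   set to a k-set K' and swapping K into K' one vertex at a time (possible
   since K ∩ K' contains the old dominating set), and across a deletion from
   a (k+1)-set S because two k-subsets of S are equal or X_k-adjacent.
   At the end of the path S = B has size k, so B ⊆ K forces B = K. *)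

Section DominatingSets.
Variables (T : finType) (e : rel T).

Lemma dominating_sup (S S' : {set T}) :
  dominating e S -> S \subset S' -> dominating e S'.
Proof.
move=> /forallP domS sSS'; apply/forallP=> v; apply/implyP=> vS'.
have vS : v \notin S by apply: contra vS' => /(subsetP sSS').
have /existsP[u /andP[uS evu]] := implyP (domS v) vS.
by apply/existsP; exists u; rewrite (subsetP sSS' u uS).
Qed.

Lemma symdiff_set1 (A B : {set T}) x :
  (A :\: B) :|: (B :\: A) = [set x] ->
  (x \notin A /\ B = x |: A) \/ (x \notin B /\ A = x |: B).
Proof.
move/setP=> eqD; have := eqD x; rewrite !inE eqxx.
case xA: (x \in A); case xB: (x \in B) => //= _; [right | left];
  split=> //; apply/setP=> y; have := eqD y; rewrite !inE;
  by case: (eqVneq y x) => [->|_]; rewrite ?xA ?xB; case: (y \in A); case: (y \in B).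
Qed.

Lemma symdiff_setU1 (S : {set T}) x :
  x \notin S -> (S :\: (x |: S)) :|: ((x |: S) :\: S) = [set x].
Proof.
move=> xS; apply/setP=> y; rewrite !inE.
by case: (eqVneq y x) => [->|_]; rewrite ?(negbTE xS) //; case: (y \in S).
Qed.

Lemma enlarge_to_card (S : {set T}) k :
  #|S| <= k -> k <= #|T| -> exists2 K : {set T}, S \subset K & #|K| = k.
Proof.
move=> leSk lekT; move: {2}(k - #|S|) (erefl (k - #|S|)) => n.
elim: n S leSk => [|n IH] S leSk defn.
  by exists S => //; apply/eqP; rewrite eqn_leq leSk -subn_eq0 defn.
have /set0Pn[x] : ~: S != set0.
  by rewrite -card_gt0 -(ltn_add2l #|S|) addn0 cardsC (leq_trans _ lekT) // -subn_gt0 defn.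
rewrite inE => xS.
have cxS : #|x |: S| = #|S|.+1 by rewrite cardsU1 xS.
have [||K sxSK cK] := IH (x |: S).
- by rewrite cxS -subn_gt0 defn.
- by rewrite cxS subnS defn.
by exists K => //; apply: subset_trans sxSK; apply: subsetU1.
Qed.

Lemma subset_card_pred (S K : {set T}) :
  K \subset S -> #|S| = #|K|.+1 -> exists2 y, y \in S & K = S :\ y.
Proof.
move=> sKS cS.
have /cards1P[y defy] : #|S :\: K| == 1 by rewrite cardsD (setIidPr sKS) cS subSnn.
exists y; first by have := set11 y; rewrite -defy => /setDP[].
by rewrite -defy setDDr setDv set0U (setIidPr sKS).
Qed.

Variable k : nat.

Lemma Xk_adj_swap (K : {set T}) a b :
  dominating e K -> #|K| = k -> a \in K -> b \notin K ->
  dominating e ((K :\ a) :|: [set b]) -> Xk_adj e k K ((K :\ a) :|: [set b]).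
Proof.
move=> dK cK aK bK dK'; rewrite /Xk_adj dK cK eqxx dK' /=.
have -> : #|(K :\ a) :|: [set b]| = k.
  by rewrite setUC cardsU1 !inE (negbTE bK) andbF -cK (cardsD1 a K) aK.
rewrite eqxx /=; apply/andP; split.
  by apply: contraNneq bK => ->; rewrite !inE eqxx orbT.
by apply/existsP; exists a; rewrite aK; apply/existsP; exists b.
Qed.

(* Swapping lemma: two k-sets whose intersection dominates are connected in
   X_k, by exchanging the vertices of K1 \ K2 for those of K2 \ K1. *)
Lemma Xk_connect_swap (K1 K2 : {set T}) :
  #|K1| = k -> #|K2| = k -> dominating e (K1 :&: K2) ->
  connect (Xk_adj e k) K1 K2.
Proof.
move: {2}#|K1 :\: K2| (erefl #|K1 :\: K2|) => n.
elim: n K1 => [|n IH] K1 defn cK1 cK2 dI.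
  have sK12 : K1 \subset K2 by rewrite -setD_eq0 -cards_eq0 defn.
  have -> : K1 = K2 by apply/eqP; rewrite eqEcard sK12 cK1 cK2 leqnn.
  exact: connect0.
have /set0Pn[a /setDP[aK1 aK2]] : K1 :\: K2 != set0 by rewrite -card_gt0 defn.
have /set0Pn[b /setDP[bK2 bK1]] : K2 :\: K1 != set0.
  by rewrite -card_gt0 cardsD setIC cK2 -cK1 -cardsD defn.
set K' := (K1 :\ a) :|: [set b].
have sIK' : K1 :&: K2 \subset K' :&: K2.
  apply/subsetP=> y /setIP[yK1 yK2]; rewrite !inE yK1 yK2 !andbT.
  by apply/orP; left; apply: contraNneq aK2 => <-.
have dK' : dominating e K'.
  by apply: dominating_sup dI (subset_trans sIK' (subsetIl _ _)).
have stepK1 : Xk_adj e k K1 K'.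
  by apply: Xk_adj_swap => //; apply: dominating_sup dI (subsetIl _ _).
have cK' : #|K'| = k by move: stepK1 => /and5P[_ _ _ /eqP].
apply: connect_trans (connect1 stepK1) (IH _ _ cK' cK2 (dominating_sup dI sIK')).
have -> : K' :\: K2 = (K1 :\: K2) :\ a.
  apply/setP=> y; rewrite !inE; case: (eqVneq y b) => [->|_]; first by rewrite bK2 !andbF.
  by rewrite orbF andbCA.
by move: defn; rewrite (cardsD1 a) !inE aK1 aK2 => -[].
Qed.

Lemma Dk_adj_setU1 m (S : {set T}) x :
  dominating e S -> x \notin S -> #|S| < m -> Dk_adj e m S (x |: S).
Proof.
move=> dS xS ltSm; rewrite /Dk_adj dS ltnW //= cardsU1 xS add1n ltSm.
rewrite (dominating_sup dS (subsetU1 _ _)) /=.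
by apply/existsP; exists x; rewrite symdiff_setU1.
Qed.

Lemma Dk_adj_sym m : symmetric (Dk_adj e m).
Proof.
move=> S S'; rewrite /Dk_adj setUC.
by apply/and5P/and5P=> -[? ? ? ? ?]; split.
Qed.

(* An X_k move S -> (S \ s) u {t} is the composite of two D_{k+1} moves
   through S u {t}. *)
Lemma Xk_adj_Dk_connect (S S' : {set T}) :
  Xk_adj e k S S' -> connect (Dk_adj e k.+1) S S'.
Proof.
case/and5P=> dS /eqP cS dS' /eqP cS' /andP[neSS' /existsP[s /andP[sS]]].
case/existsP=> t /eqP defS'.
have tS : t \notin S.
  apply: contra neSS' => tS; rewrite eq_sym eqEcard cS cS' leqnn andbT defS'.
  by rewrite subUset subD1set sub1set tS.
have sS' : s \notin S'.
  by rewrite defS' !inE eqxx /=; apply: contraNneq tS => <-.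
have defM : t |: S = s |: S'.
  apply/setP=> z; rewrite defS' !inE.
  by case: (eqVneq z s) => [->|_]; rewrite ?sS ?orbT //= orbC.
apply: (@connect_trans _ _ (t |: S)); apply: connect1.
  by apply: Dk_adj_setU1; rewrite ?cS.
by rewrite Dk_adj_sym defM; apply: Dk_adj_setU1; rewrite ?cS'.
Qed.

End DominatingSets.

Section Tracking.
Variables (T : finType) (e : rel T) (k : nat) (A : {set T}).
Hypothesis le_k_card : k <= #|T|.

Definition tracked (S : {set T}) : Prop :=
  exists2 K : {set T},
    [/\ dominating e K, #|K| = k & connect (Xk_adj e k) A K] &
    if #|S| <= k then S \subset K else K \subset S.

(* Adding a vertex: enlarge the new set to a k-set and swap K into it. *)
Lemma tracked_add (S : {set T}) x :
  dominating e S -> x \notin S -> #|x |: S| <= k.+1 ->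
  tracked S -> tracked (x |: S).
Proof.
move=> dS xS; rewrite cardsU1 xS add1n ltnS => leSk [K [dK cK reachK]].
rewrite leSk => sSK.
case: (leqP #|S|.+1 k) => [ltSk | geSk].
  have [|K' sxSK' cK'] := @enlarge_to_card T (x |: S) k _ le_k_card.
    by rewrite cardsU1 xS.
  exists K'; last by rewrite cardsU1 xS ltSk.
  split=> //; first exact: dominating_sup dS (subset_trans (subsetU1 _ _) sxSK').
  apply: connect_trans reachK (Xk_connect_swap cK cK' (dominating_sup dS _)).
  by rewrite subsetI sSK (subset_trans (subsetU1 _ _) sxSK').
have eqSK : S = K by apply/eqP; rewrite eqEcard sSK cK -ltnS.
by exists K => //; rewrite cardsU1 xS add1n leqNgt geSk /= -eqSK subsetU1.
Qed.

(* Removing a vertex from a (k+1)-set S: the k-subset K of S and the new set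
   S \ x are equal or differ by one exchange. *)
Lemma tracked_remove (S : {set T}) x :
  dominating e (S :\ x) -> x \in S -> #|S| <= k.+1 ->
  tracked S -> tracked (S :\ x).
Proof.
move=> dSx xS leSk1 [K [dK cK reachK] hK].
have cSx : #|S| = #|S :\ x|.+1 by rewrite (cardsD1 x S) xS.
case: (leqP #|S| k) hK => [leSk sSK | ltkS sKS].
  exists K => //; rewrite (leq_trans _ leSk) ?cSx //.
  exact: subset_trans (subsetDl _ _) sSK.
have cSxk : #|S :\ x| = k by apply/eqP; rewrite eqn_leq -ltnS -cSx leSk1 -ltnS -cSx.
exists (S :\ x); last by rewrite cSxk leqnn.
split=> //; apply: connect_trans reachK _.
have [y yS defK] : exists2 y, y \in S & K = S :\ y.
  by apply: subset_card_pred; rewrite // cK -cSxk.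
case: (eqVneq y x) => [<-|neyx]; first by rewrite defK connect0.
have defSx : S :\ x = (K :\ x) :|: [set y].
  apply/setP=> z; rewrite defK !inE.
  by case: (eqVneq z y) => [->|_]; rewrite ?yS ?neyx //= ?orbF.
rewrite defSx; apply/connect1/Xk_adj_swap; rewrite -?defSx // defK !inE ?eqxx //.
by rewrite eq_sym neyx.
Qed.

Lemma tracked_step (S S' : {set T}) :
  Dk_adj e k.+1 S S' -> tracked S -> tracked S'.
Proof.
case/and5P=> dS leS1 dS' leS1' /existsP[x /eqP /symdiff_set1].
case=> [[xS defS'] | [xS' defS]].
  by rewrite defS' in leS1' *; apply: tracked_add.
have defS' : S' = S :\ x by rewrite defS setU1K.
have xS : x \in S by rewrite defS setU11.
by rewrite defS' in dS' *; apply: tracked_remove.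
Qed.

Lemma tracked_connect (S S' : {set T}) :
  connect (Dk_adj e k.+1) S S' -> tracked S -> tracked S'.
Proof.
case/connectP=> p pathS ->; elim: p S pathS => [|S1 p IH] S //= /andP[stepS1 pathS1].
by move=> trS; apply: IH pathS1 (tracked_step stepS1 trS).
Qed.

End Tracking.

Theorem lemma11 (T : finType) (e : rel T) (k : nat) (A B : {set T}) :
  simple_graph e -> gamma e <= k ->
  dominating e A -> dominating e B -> #|A| = k -> #|B| = k ->
  connect (Dk_adj e k.+1) A B <-> connect (Xk_adj e k) A B.
Proof.
move=> _ _ dA _ cA cB; split; last first.
  by apply: connect_sub => S S'; apply: Xk_adj_Dk_connect.
move=> connAB.
have le_k_card : k <= #|T| by rewrite -cA max_card.
have trA : tracked e k A A.
  by exists A; [split=> //; exact: connect0 | rewrite cA leqnn].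
have [K [_ cK reachK]] := tracked_connect le_k_card connAB trA.
rewrite cB leqnn => sBK.
have -> : B = K by apply/eqP; rewrite eqEcard sBK cK cB leqnn.
exact: reachK.
Qed.
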